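(* Let $S$ be an infinite set and $\mathcal{F}\subseteq 2^S$ closed under finite unions. Let $\mathbf{A}=(A_1,\dots,A_k)$, $k>1$, be a classification problem. Then $\mathbf{A}\in\mathit{core}_k(\mathcal{F})$ if and only if $(A_i,A_j)\in\mathit{core}_2(\mathcal{F})$ for all $1\le i\ne j\le k$.
   Context: A classification problem is a vector $(A_1,\dots,A_k)$, $k\ge1$, of pairwise disjoint infinite subsets of $S$, of length $k$. For vectors $\mathbf{B}=(B_1,\dots,B_m)$, $\mathbf{Q}=(Q_1,\dots,Q_k)$, $\mathbf{B}\le\mathbf{Q}$ means $1\le m\le k$ and there is an injective $\sigma:\{1,\dots,m\}\to\{1,\dots,k\}$ with $B_i\subseteq Q_{\sigma(i)}$. An $\mathcal{F}$-partition is a vector of pairwise disjoint members of $\mathcal{F}$ whose union is $S$. $\mathit{class}_k(\mathcal{F})$: classification problems $\mathbf{A}$ of length $k$ with $\mathbf{A}\le\mathbf{Q}$ for some $\mathcal{F}$-partition $\mathbf{Q}$ of length $k$. For $k>1$, $\mathit{core}_k(\mathcal{F})$ is the set of classification problems $\mathbf{A}$ of length $k$ such that every classification problem $\mathbf{A}'\le\mathbf{A}$ of length $|\mathbf{A}'|>1$ satisfies $\mathbf{A}'\notin\mathit{class}_{|\mathbf{A}'|}(\mathcal{F})$. *)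

From mathcomp Require Import all_boot all_order.
From mathcomp Require Import boolp classical_sets cardinality.
Set Implicit Arguments. Unset Strict Implicit. Unset Printing Implicit Defensive.
Local Open Scope classical_set_scope.

(* A vector of length k of subsets of S is a map 'I_k -> set S. *)

Definition pairwise_disjoint (S : Type) (k : nat) (A : 'I_k -> set S) : Prop :=
  forall i j : 'I_k, i != j -> A i `&` A j = set0.

Definition classification_problem (S : Type) (k : nat) (A : 'I_k -> set S) : Prop :=
  (1 <= k)%N /\ pairwise_disjoint A /\ (forall i, infinite_set (A i)).

Definition vle (S : Type) (m k : nat) (B : 'I_m -> set S) (Q : 'I_k -> set S) : Prop :=
  (1 <= m)%N /\ (m <= k)%N /\
  exists sigma : 'I_m -> 'I_k, injective sigma /\ forall i, B i `<=` Q (sigma i).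

Definition F_partition (S : Type) (F : set (set S)) (k : nat) (Q : 'I_k -> set S) : Prop :=
  (forall i, F (Q i)) /\ pairwise_disjoint Q /\ \bigcup_(i in [set: 'I_k]) Q i = [set: S].

Definition class_k (S : Type) (F : set (set S)) (k : nat) (A : 'I_k -> set S) : Prop :=
  classification_problem A /\
  exists Q : 'I_k -> set S, F_partition F Q /\ vle A Q.

Definition core_k (S : Type) (F : set (set S)) (k : nat) (A : 'I_k -> set S) : Prop :=
  classification_problem A /\
  forall (m : nat) (A' : 'I_m -> set S),
    classification_problem A' -> vle A' A -> (1 < m)%N -> ~ class_k F A'.

Definition pair_vec (S : Type) (k : nat) (A : 'I_k -> set S) (i j : 'I_k) : 'I_2 -> set S :=
  fun t => if t == ord0 then A i else A j.

Definition closed_under_finite_unions (S : Type) (F : set (set S)) : Prop :=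
  forall X Y, F X -> F Y -> F (X `|` Y).

(** The pairs (A_i, A_j) are themselves subproblems of A, and being in the core
   is inherited by subproblems, which gives one direction. Conversely, if some
   subproblem A' <= A of length m > 1 were F-classifiable by an F-partition Q,
   merge all blocks of Q except the one containing A'_1: closure under finite
   unions keeps the result an F-partition of length 2, which classifies
   (A'_1, A'_2), a subproblem of (A_i, A_j) for the two indices i != j that
   A'_1 and A'_2 are sent to. *)

From mathcomp Require Import all_boot all_order.
From mathcomp Require Import boolp classical_sets cardinality zify.
Set Implicit Arguments. Unset Strict Implicit. Unset Printing Implicit Defensive.
Local Open Scope classical_set_scope.

Lemma ord2_cases (t : 'I_2) : t = ord0 \/ t = ord_max.
Proof. by case: t => [[|[|n]] lt_t2]; [left | right | by []]; apply: val_inj. Qed.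

Section Vectors.
Variable S : Type.

Lemma pairwise_disjoint2 (V : 'I_2 -> set S) :
  V ord0 `&` V ord_max = set0 -> pairwise_disjoint V.
Proof.
move=> V01 t u; case: (ord2_cases t) => ->; case: (ord2_cases u) => -> //= _.
by rewrite setIC.
Qed.

Lemma classification_problem_pair_vec (k : nat) (A : 'I_k -> set S) (i j : 'I_k) :
  classification_problem A -> i != j -> classification_problem (pair_vec A i j).
Proof.
move=> [_ [disjA infA]] ij; split=> //; split.
  exact/pairwise_disjoint2/disjA.
by move=> t; rewrite /pair_vec; case: (t == ord0).
Qed.

Lemma vle_trans (m n k : nat) (B : 'I_m -> set S) (A : 'I_n -> set S)
    (C : 'I_k -> set S) :
  vle B A -> vle A C -> vle B C.
Proof.
move=> [m_gt0 [le_mn [s [s_inj subBA]]]] [_ [le_nk [t [t_inj subAC]]]].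
split=> //; split; first exact: leq_trans le_nk.
exists (t \o s); split; first exact: inj_comp.
by move=> l; apply: subset_trans (subAC _).
Qed.

Lemma vle_pair_vec (k : nat) (A : 'I_k -> set S) (i j : 'I_k) :
  i != j -> vle (pair_vec A i j) A.
Proof.
move=> ij; split=> //; split.
  move: ij (ltn_ord i) (ltn_ord j); rewrite -val_eqE /=; lia.
exists (fun u => if u == ord0 then i else j); split.
  move=> u v; case: (ord2_cases u) => ->; case: (ord2_cases v) => -> //= eq_ij.
  - by rewrite eq_ij eqxx in ij.
  - by rewrite eq_ij eqxx in ij.
by move=> u; rewrite /pair_vec; case: (u == ord0).
Qed.

Lemma vle_pair_vec_map (m k : nat) (B : 'I_m -> set S) (A : 'I_k -> set S)
    (s : 'I_m -> 'I_k) (a b : 'I_m) :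
  (forall l, B l `<=` A (s l)) -> vle (pair_vec B a b) (pair_vec A (s a) (s b)).
Proof.
move=> subBA; split=> //; split=> //; exists id; split=> // u.
by rewrite /pair_vec; case: (u == ord0).
Qed.

Variable F : set (set S).
Hypothesis unionF : closed_under_finite_unions F.

Lemma bigcup_closed (I : finType) (P : pred I) (Q : I -> set S) :
  (forall i, P i -> F (Q i)) -> (exists i, P i) ->
  F (\bigcup_(i in [set i | P i]) Q i).
Proof.
move=> FQ [i0 Pi0].
have -> : [set i | P i] = [set i | (i \in enum I) && P i].
  by apply/seteqP; split=> i /=; rewrite mem_enum.
rewrite bigcup_seq_cond big_enum_cond (bigD1 i0) //=.
(* The empty union is not assumed to lie in F, so track "empty or in F". *)
have [->|Frest] : \big[setU/set0]_(i | P i && (i != i0)) Q i = set0 \/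
                  F (\big[setU/set0]_(i | P i && (i != i0)) Q i).
- apply: (big_ind (fun X => X = set0 \/ F X)).
  + by left.
  + by move=> X Y [->|FX] [->|FY]; rewrite ?set0U ?setU0; [left|right..];
      last exact: unionF.
  + by move=> i /andP[Pi _]; right; apply: FQ.
- by rewrite setU0; apply: FQ.
- by apply: unionF => //; apply: FQ.
Qed.

Definition coarsen_at (k : nat) (Q : 'I_k -> set S) (i : 'I_k) : 'I_2 -> set S :=
  fun u => if u == ord0 then Q i else \bigcup_(l in [set l | l != i]) Q l.

Lemma F_partition_coarsen_at (k : nat) (Q : 'I_k -> set S) (i j : 'I_k) :
  F_partition F Q -> i != j -> F_partition F (coarsen_at Q i).
Proof.
move=> [FQ [disjQ coverQ]] ij; split; [|split].
- move=> u; rewrite /coarsen_at; case: (u == ord0); first exact: FQ.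
  by apply: bigcup_closed => [l _|]; [apply: FQ | exists j; rewrite eq_sym].
- apply: pairwise_disjoint2; apply/seteqP; split=> x //= [Qix [l li Qlx]].
  suff : (Q i `&` Q l) x by rewrite disjQ // eq_sym.
  by [].
- apply/seteqP; split=> x // _.
  have [l _ Qlx] : (\bigcup_(l in [set: 'I_k]) Q l) x by rewrite coverQ.
  have [<-|li] := eqVneq l i; first by exists ord0.
  by exists ord_max => //=; exists l.
Qed.

Lemma class_k_pair_vec (m : nat) (B : 'I_m -> set S) (a b : 'I_m) :
  class_k F B -> a != b -> class_k F (pair_vec B a b).
Proof.
move=> [CPB [Q [FPQ [_ [_ [t [t_inj subBQ]]]]]]] ab.
have tab : t a != t b by apply: contra ab => /eqP /t_inj ->.
split; first exact: classification_problem_pair_vec.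
exists (coarsen_at Q (t a)); split; first exact: F_partition_coarsen_at tab.
split=> //; split=> //; exists id; split=> // u.
rewrite /pair_vec /coarsen_at; case: (u == ord0); first exact: subBQ.
by move=> x /subBQ Qbx; exists (t b) => //=; rewrite eq_sym.
Qed.

Lemma core_k_vle (m k : nat) (B : 'I_m -> set S) (A : 'I_k -> set S) :
  core_k F A -> classification_problem B -> vle B A -> core_k F B.
Proof.
move=> [_ noclassA] CPB leBA; split=> // n A' CPA' leA'B.
exact: noclassA CPA' (vle_trans leA'B leBA).
Qed.

End Vectors.

Theorem lemma3p4 (S : Type) (F : set (set S)) (k : nat) (A : 'I_k -> set S) :
  infinite_set [set: S] ->
  closed_under_finite_unions F ->
  (1 < k)%N ->
  classification_problem A ->
  (core_k F A <-> forall i j : 'I_k, i != j -> core_k F (pair_vec A i j)).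
Proof.
move=> _ unionF _ CPA; split.
  move=> coreA i j ij.
  exact: core_k_vle coreA (classification_problem_pair_vec CPA ij) (vle_pair_vec A ij).
move=> core2; split=> // m A' CPA' [_ [_ [s [s_inj subA'A]]]] m_gt1 classA'.
pose a : 'I_m := Ordinal (ltnW m_gt1); pose b : 'I_m := Ordinal m_gt1.
have ab : a != b by [].
have sab : s a != s b by apply: contra ab => /eqP /s_inj ->.
have [_ noclass] := core2 _ _ sab.
apply: (noclass 2 _ (classification_problem_pair_vec CPA' ab)
          (vle_pair_vec_map a b subA'A) isT).
exact: class_k_pair_vec.
Qed.
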